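(* Let $N\ge 1$ and let $\mathcal{A}_N=\left\{\sigma_z^{(1)},\dots,\sigma_z^{(N)},\ \sum_{k=1}^{N}\sigma_x^{(k)},\ \sum_{1\le i<j\le N}\sigma_y^{(i)}\sigma_y^{(j)}\right\}$ (for $N=1$ the last sum is empty and is omitted). Then the smallest real vector space of $2^N\times 2^N$ matrices that contains $\mathcal{A}_N$ and is closed under the bracket $(X,Y)\mapsto i[X,Y]=i(XY-YX)$ is the space of all traceless Hermitian $2^N\times 2^N$ matrices, i.e. $\mathcal{A}_N$ generates $\mathfrak{su}(2^N)$ (in its Hermitian realization) by real linear combinations and iterated commutators. *)

From HB Require Import structures.
From mathcomp Require Import all_boot all_order all_algebra.
From mathcomp Require Import complex.
Set Implicit Arguments. Unset Strict Implicit. Unset Printing Implicit Defensive.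
Import Order.TTheory GRing.Theory Num.Theory.
Local Open Scope ring_scope.

Section Pauli.
Variable R : rcfType.
Local Notation C := R[i].
Variable N : nat.
Local Notation M := 'M[C]_(2 ^ N).

(* The computational basis of (C^2)^{\otimes N} is indexed by 'I_(2^N);
   bit k of the index i (k < N) is the state of qubit k (qubits are
   numbered 0..N-1 here, i.e. qubit k+1 of the paper). *)
Definition qbit (k : nat) (i : nat) : bool := odd (i %/ 2 ^ k).

Definition agree_off (k : nat) (i j : nat) : bool :=
  [forall l : 'I_N, (val l != k) ==> (qbit l i == qbit l j)].

(* sigma_z acting on qubit k: I (x) .. (x) diag(1,-1) (x) .. (x) I *)
Definition sigma_z (k : 'I_N) : M :=
  \matrix_(i, j) (if i == j then (if qbit k i then -1 else 1) else 0).

(* sigma_x = [[0,1],[1,0]] acting on qubit k *)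
Definition sigma_x (k : 'I_N) : M :=
  \matrix_(i, j) (if agree_off k i j && (qbit k i != qbit k j) then 1 else 0).

(* sigma_y = [[0,-i],[i,0]] acting on qubit k:
   <0|sigma_y|1> = -i, <1|sigma_y|0> = i *)
Definition sigma_y (k : 'I_N) : M :=
  \matrix_(i, j) (if agree_off k i j && (qbit k i != qbit k j)
                  then (if qbit k i then ('i)%C else - ('i)%C) else 0).

Definition gen_set (A : M) : Prop :=
  (exists k : 'I_N, A = sigma_z k)
  \/ A = \sum_(k < N) sigma_x k
  \/ A = \sum_(i < N) \sum_(j < N | (i < j)%N) (sigma_y i *m sigma_y j).

Definition ibracket (X Y : M) : M := ('i)%C *: (X *m Y - Y *m X).

Inductive lie_closure (S : M -> Prop) : M -> Prop :=
  | lc_gen A : S A -> lie_closure S A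
  | lc_zero : lie_closure S 0
  | lc_add A B : lie_closure S A -> lie_closure S B -> lie_closure S (A + B)
  | lc_scale (r : R) A : lie_closure S A -> lie_closure S ((r%:C)%C *: A)
  | lc_bracket A B : lie_closure S A -> lie_closure S B ->
                     lie_closure S (ibracket A B).

Definition is_hermitian (A : M) : Prop := forall i j, A j i = ((A i j)^*)%C.

Definition traceless (A : M) : Prop := \tr A = 0.

End Pauli.

(* In the computational basis every Pauli product is a monomial matrix: the
   basis vector x is sent to a multiple of p x, where p flips some qubits, and
   the i-bracket of two monomial matrices with commuting permutations is again
   monomial.  Bracketing Z_k with the generators isolates Y_k, X_k and X_a X_b,
   and from these Z_k X_m and Z_k Z_m.  Bracketing with Z_k Z_m multiplies the
   weight of an X_k- or Y_k-type monomial by the sign of qubit m, so real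
   combinations reach the weight "x agrees with a off qubit k", which gives
   E_ab + E_ba and i(E_ab - E_ba) for basis states a, b at Hamming distance
   one.  Brackets along a Hamming path extend this to all pairs a <> b and
   produce E_aa - E_bb; these span the traceless Hermitian matrices.
   Conversely, the generators are Hermitian and traceless, and both properties
   survive real combinations and i[., .]. *)

From Pilot Require Import Defs.
From HB Require Import structures.
From mathcomp Require Import all_boot all_order all_algebra.
From mathcomp Require Import complex.
From mathcomp Require Import zify ring.
Set Implicit Arguments. Unset Strict Implicit. Unset Printing Implicit Defensive.
Import Order.TTheory GRing.Theory Num.Theory.

Lemma qbit0 x : qbit 0 x = odd x.
Proof. by rewrite /qbit expn0 divn1. Qed.

Lemma qbitS k x : qbit k.+1 x = qbit k x./2.
Proof. by rewrite /qbit expnS divnMA divn2. Qed.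

Lemma qbit_divn n k x : qbit (n + k) x = qbit k (x %/ 2 ^ n).
Proof. by rewrite /qbit expnD divnMA. Qed.

Lemma qbit_inj n x y : x < 2 ^ n -> y < 2 ^ n ->
  (forall k, k < n -> qbit k x = qbit k y) -> x = y.
Proof.
elim: n x y => [|n IHn] x y ltx lty eq_bits.
  by move: ltx lty; rewrite expn0 !ltnS !leqn0 => /eqP-> /eqP->.
have eq_odd : odd x = odd y by rewrite -!qbit0 eq_bits.
have eq_half : x./2 = y./2.
  apply: IHn => [||k ltkn]; last by rewrite -!qbitS eq_bits.
  - by move: ltx; rewrite expnS; lia.
  - by move: lty; rewrite expnS; lia.
by rewrite -[x]odd_double_half -[y]odd_double_half eq_odd eq_half.
Qed.

Lemma qbit_eq0 x : (forall k, ~~ qbit k x) -> x = 0.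
Proof.
move=> x_bits; apply: (@qbit_inj x x 0); first exact: ltn_expl.
  by rewrite expn_gt0.
by move=> k _; rewrite (negbTE (x_bits k)) /qbit div0n.
Qed.

Lemma qbitD_pow2_self k x : qbit k (x + 2 ^ k) = ~~ qbit k x.
Proof. by rewrite /qbit divnDr // divnn expn_gt0 oddD addbT. Qed.

Lemma qbitD_pow2 k x : ~~ qbit k x ->
  forall l, qbit l (x + 2 ^ k) = qbit l x (+) (l == k).
Proof.
elim: k x => [|k IHk] x xk0 [|l].
- by move: xk0; rewrite !qbit0 expn0 addn1 /= => /negbTE->.
- move: xk0; rewrite !qbitS expn0 addn1 qbit0 /= addbF => /negbTE xk0.
  by rewrite uphalf_half xk0.
- by rewrite !qbit0 oddD expnS oddM /= addbF.
have half_xD : (x + 2 ^ k.+1)./2 = x./2 + 2 ^ k.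
  by rewrite halfD expnS oddM andbF add0n mul2n doubleK.
by move: xk0; rewrite !qbitS half_xD => /IHk->.
Qed.

Definition flip_bit (k x : nat) : nat :=
  if qbit k x then x - 2 ^ k else x + 2 ^ k.

Lemma qbit_flip_bit k x l : qbit l (flip_bit k x) = qbit l x (+) (l == k).
Proof.
rewrite /flip_bit; case: ifPn => [xk1|/qbitD_pow2//].
have le_pow_x : 2 ^ k <= x.
  by rewrite leqNgt; apply: contraTN xk1 => /divn_small; rewrite /qbit => ->.
have xk0 : ~~ qbit k (x - 2 ^ k) by rewrite -qbitD_pow2_self subnK.
by rewrite -{2}(subnK le_pow_x) (qbitD_pow2 xk0) -addbA addbb addbF.
Qed.

Lemma flip_bit_lt n k x : k < n -> x < 2 ^ n -> flip_bit k x < 2 ^ n.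
Proof.
move=> ltkn ltx; rewrite /flip_bit; case: ifPn => [_|xk0].
  exact: leq_ltn_trans (leq_subr _ _) ltx.
have high_bits0 : (x + 2 ^ k) %/ 2 ^ n = 0.
  apply: qbit_eq0 => j; rewrite -qbit_divn qbitD_pow2 //.
  have /negbTE-> : n + j != k by rewrite neq_ltn (leq_trans ltkn (leq_addr _ _)) orbT.
  by rewrite addbF qbit_divn divn_small // /qbit div0n.
by rewrite ltnNge -divn_gt0 ?expn_gt0 // high_bits0.
Qed.

Section BitFlips.
Variable N : nat.
Local Notation I := 'I_(2 ^ N).

Definition flip (k : 'I_N) (x : I) : I :=
  Ordinal (flip_bit_lt (ltn_ord k) (ltn_ord x)).

Lemma qbit_flip k x (l : 'I_N) : qbit l (flip k x) = qbit l x (+) (l == k).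
Proof. exact: qbit_flip_bit. Qed.

Lemma eq_qbits (x y : I) : (forall l : 'I_N, qbit l x = qbit l y) -> x = y.
Proof.
move=> eq_bits; apply/val_inj/(@qbit_inj N); rewrite ?ltn_ord // => l ltlN.
exact: (eq_bits (Ordinal ltlN)).
Qed.

Lemma flipK k : involutive (flip k).
Proof. by move=> x; apply: eq_qbits => l; rewrite !qbit_flip -addbA addbb addbF. Qed.

Lemma flipC k m x : flip k (flip m x) = flip m (flip k x).
Proof. by apply: eq_qbits => l; rewrite !qbit_flip -!addbA [(_ == k) (+) _]addbC. Qed.

Lemma flip_neq k x : flip k x != x.
Proof.
by apply/eqP => /(congr1 (fun y : I => qbit k y)); rewrite qbit_flip eqxx addbT; case: qbit.
Qed.

Lemma flip2_neq k m x : k != m -> flip m (flip k x) != x.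
Proof.
move=> kNm; apply/eqP => /(congr1 (fun y : I => qbit k y)).
by rewrite !qbit_flip eqxx (negbTE kNm) addbF addbT; case: qbit.
Qed.

End BitFlips.

Local Open Scope ring_scope.

Section MonomialMatrices.
Variables (T : pzRingType) (n : nat).
Implicit Types (p q : 'I_n -> 'I_n) (f g : 'I_n -> T).

Definition monomial_mx p f : 'M[T]_n :=
  \matrix_(x, y) (if y == p x then f x else 0).

Lemma monomial_mxE p f x y : monomial_mx p f x y = if y == p x then f x else 0.
Proof. exact: mxE. Qed.

Lemma eq_monomial_mx p q f g : p =1 q -> f =1 g -> monomial_mx p f = monomial_mx q g.
Proof. by move=> eq_pq eq_fg; apply/matrixP => x y; rewrite !mxE eq_pq eq_fg. Qed.

Lemma mul_monomial_mx p q f g :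
  monomial_mx p f *m monomial_mx q g = monomial_mx (q \o p) (fun x => f x * g (p x)).
Proof.
apply/matrixP => x y; rewrite !mxE (bigD1 (p x)) //= big1 => [|z /negbTE zNpx].
  by rewrite !monomial_mxE eqxx addr0; case: ifP; rewrite ?mulr0.
by rewrite monomial_mxE zNpx mul0r.
Qed.

Lemma add_monomial_mx p f g : monomial_mx p f + monomial_mx p g = monomial_mx p (f \+ g).
Proof. by apply/matrixP => x y; rewrite !mxE; case: ifP; rewrite ?addr0. Qed.

Lemma scale_monomial_mx p c f : c *: monomial_mx p f = monomial_mx p (fun x => c * f x).
Proof. by apply/matrixP => x y; rewrite !mxE; case: ifP; rewrite ?mulr0. Qed.

Lemma monomial_mx0 p : monomial_mx p (fun=> 0) = 0.
Proof. by apply/matrixP => x y; rewrite !mxE; case: ifP. Qed.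

Lemma commutator_monomial_mx p q f g : p \o q =1 q \o p ->
  monomial_mx p f *m monomial_mx q g - monomial_mx q g *m monomial_mx p f =
  monomial_mx (q \o p) (fun x => f x * g (p x) - g x * f (q x)).
Proof.
move=> pqC; rewrite !mul_monomial_mx (eq_monomial_mx pqC (frefl _)).
rewrite -scaleN1r scale_monomial_mx add_monomial_mx.
by apply: eq_monomial_mx => // x; rewrite /= mulN1r.
Qed.

Lemma monomial_mx_pair p f a : involutive p -> p a != a ->
    (forall x, x != a -> x != p a -> f x = 0) ->
  monomial_mx p f = f a *: delta_mx a (p a) + f (p a) *: delta_mx (p a) a.
Proof.
move=> pK paNa f0; have aNpa : a != p a by rewrite eq_sym.
apply/matrixP => x y; rewrite !mxE; case: (eqVneq x a) => [->|xNa].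
  by rewrite (negbTE aNpa) /=; case: eqP; rewrite ?mulr1 ?mulr0 ?addr0.
case: (eqVneq x (p a)) => [->|xNpa].
  by rewrite pK /=; case: eqP; rewrite ?mulr1 ?mulr0 ?add0r.
by rewrite f0 // !mulr0 addr0; case: ifP.
Qed.

Lemma mxtrace_monomial_mx p f : (forall x, p x != x) -> \tr (monomial_mx p f) = 0.
Proof. by move=> p_fixfree; apply: big1 => x _; rewrite mxE eq_sym (negbTE (p_fixfree x)). Qed.

End MonomialMatrices.

Section MatrixUnits.
Variables (T : comNzRingType) (n : nat).
Implicit Types x y m : 'I_n.

Definition sym_delta x y : 'M[T]_n := delta_mx x y + delta_mx y x.
Definition skew_delta x y : 'M[T]_n := delta_mx x y - delta_mx y x.
Definition diag_delta x y : 'M[T]_n := delta_mx x x - delta_mx y y.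

Ltac expand_delta_products :=
  rewrite /sym_delta /skew_delta /diag_delta;
  rewrite ?(mulmxDl, mulmxDr, mulmxBl, mulmxBr, mulmxN, mulNmx) !mul_delta_mx_cond.

Lemma commutator_sym_delta x m y : x != m -> m != y -> x != y ->
  sym_delta x m *m sym_delta m y - sym_delta m y *m sym_delta x m = skew_delta x y.
Proof.
move=> xNm mNy xNy; expand_delta_products.
rewrite eqxx ?(eq_sym y) ?(eq_sym m x) (negbTE xNm) (negbTE mNy) (negbTE xNy) /=.
by apply/matrixP => u v; rewrite !mxE; ring.
Qed.

Lemma commutator_sym_skew_delta x m y : x != m -> m != y -> x != y ->
  sym_delta x m *m skew_delta m y - skew_delta m y *m sym_delta x m = sym_delta x y.
Proof.
move=> xNm mNy xNy; expand_delta_products.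
rewrite eqxx ?(eq_sym y) ?(eq_sym m x) (negbTE xNm) (negbTE mNy) (negbTE xNy) /=.
by apply/matrixP => u v; rewrite !mxE; ring.
Qed.

Lemma commutator_sym_skew_delta_same x y : x != y ->
  sym_delta x y *m skew_delta x y - skew_delta x y *m sym_delta x y = - diag_delta x y *+ 2.
Proof.
move=> xNy; expand_delta_products.
rewrite !eqxx (eq_sym y) (negbTE xNy) /=.
by apply/matrixP => u v; rewrite !mxE; ring.
Qed.

End MatrixUnits.

Arguments sym_delta {T n}.
Arguments skew_delta {T n}.
Arguments diag_delta {T n}.

Section LieClosure.
Variables (R : rcfType) (N : nat) (S : 'M[R[i]]_(2 ^ N) -> Prop).
Local Notation L := (lie_closure S).

Lemma lie_closureN A : L A -> L (- A).
Proof. by move=> LA; have := lc_scale (-1) LA; rewrite rmorphN1 scaleN1r. Qed.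

Lemma lie_closure_sum (I : finType) (P : pred I) (F : I -> 'M[R[i]]_(2 ^ N)) :
  (forall i, P i -> L (F i)) -> L (\sum_(i | P i) F i).
Proof. by move=> LF; apply: (big_ind L) => //; [exact: lc_zero | exact: lc_add]. Qed.

Lemma lie_closure_natrZ n A : (0 < n)%N -> L (n%:R *: A) -> L A.
Proof.
move=> n_gt0 /(lc_scale n%:R^-1); rewrite scalerA -(rmorph_nat (@complex.real_complex R)).
by rewrite -rmorphM mulVf ?pnatr_eq0 -?lt0n // rmorph1 scale1r.
Qed.

Lemma lie_closureMn n A : (0 < n)%N -> L (A *+ n) -> L A.
Proof. by rewrite -scaler_nat; exact: lie_closure_natrZ. Qed.

End LieClosure.

Section PauliMonomials.
Variables (R : rcfType) (N : nat).
Local Notation C := R[i].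
Local Notation I := 'I_(2 ^ N).
Local Notation M := 'M[C]_(2 ^ N).
Local Notation iC := ('i)%C.
Local Notation ibracket := (@ibracket R N).
Implicit Types (k m : 'I_N) (x y : I).

Lemma sqr_i_C : iC * iC = -1 :> C.
Proof. by rewrite -expr2 sqr_i. Qed.

Definition zsgn k x : C := if qbit k x then -1 else 1.

Lemma zsgn_flip k m x : zsgn k (flip m x) = (if m == k then -1 else 1) * zsgn k x.
Proof.
rewrite /zsgn qbit_flip eq_sym; case: eqP => _; last by rewrite addbF mul1r.
by rewrite addbT; case: qbit; rewrite ?mulrNN ?mulr1.
Qed.

Lemma zsgnM_self k x : zsgn k x * zsgn k x = 1.
Proof. by rewrite /zsgn; case: qbit; rewrite ?mulrNN mulr1. Qed.

Lemma agree_off_flip k x y :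
  agree_off N k x y && (qbit k x != qbit k y) = (y == flip k x).
Proof.
apply/idP/eqP => [/andP[/forallP agree_xy xyNk] | ->].
  apply: eq_qbits => l; rewrite qbit_flip; case: (eqVneq l k) => [->|lNk].
    by rewrite addbT; move: xyNk; case: (qbit k x); case: (qbit k y).
  by rewrite addbF; move/implyP/(_ lNk)/eqP: (agree_xy l).
rewrite qbit_flip eqxx addbT; case: qbit; rewrite andbT.
all: by apply/forallP => l; apply/implyP => lNk; rewrite qbit_flip (negbTE (lNk : l != k)) addbF.
Qed.

Lemma sigma_zE k : sigma_z R k = monomial_mx id (zsgn k).
Proof. by apply/matrixP => x y; rewrite !mxE eq_sym. Qed.

Lemma sigma_xE k : sigma_x R k = monomial_mx (flip k) (fun=> 1).
Proof. by apply/matrixP => x y; rewrite !mxE agree_off_flip. Qed.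

Lemma sigma_yE k : sigma_y R k = monomial_mx (flip k) (fun x => - iC * zsgn k x).
Proof.
apply/matrixP => x y; rewrite !mxE agree_off_flip /zsgn; case: ifP => //.
by case: qbit; rewrite ?mulrNN ?mulr1 ?mulrN1.
Qed.

Lemma mul_sigma_y k m : k != m -> sigma_y R k *m sigma_y R m =
  monomial_mx (flip m \o flip k) (fun x => - (zsgn k x * zsgn m x)).
Proof.
move=> kNm; rewrite !sigma_yE mul_monomial_mx; apply: eq_monomial_mx => // x.
by rewrite zsgn_flip (negbTE kNm) mul1r; have := sqr_i_C => ii; ring: ii.
Qed.

Lemma ibracketZr c A B : ibracket A (c *: B) = c *: ibracket A B.
Proof. by rewrite /Defs.ibracket -scalemxAl -scalemxAr -scalerBr !scalerA mulrC. Qed.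

Lemma ibracket_sumr (J : finType) (P : pred J) (F : J -> M) A :
  ibracket A (\sum_(j | P j) F j) = \sum_(j | P j) ibracket A (F j).
Proof. by rewrite /Defs.ibracket mulmx_sumr mulmx_suml -sumrB scaler_sumr. Qed.

Lemma ibracket_monomial_mx p q f g : p \o q =1 q \o p ->
  ibracket (monomial_mx p f) (monomial_mx q g) =
  monomial_mx (q \o p) (fun x => iC * (f x * g (p x) - g x * f (q x))).
Proof. by move=> pqC; rewrite /Defs.ibracket commutator_monomial_mx // scale_monomial_mx. Qed.

Lemma ibracket_sigma_z_monomial k q g :
  ibracket (sigma_z R k) (monomial_mx q g) =
  monomial_mx q (fun x => iC * g x * (zsgn k x - zsgn k (q x))).
Proof.
rewrite sigma_zE ibracket_monomial_mx //.
by apply: eq_monomial_mx => // x /=; ring.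
Qed.

Lemma ibracket_sigma_zx k m :
  ibracket (sigma_z R k) (sigma_x R m) = if m == k then - (sigma_y R k *+ 2) else 0.
Proof.
rewrite sigma_xE ibracket_sigma_z_monomial; case: eqVneq => [->|mNk].
  rewrite sigma_yE -scaler_nat -scaleN1r !scale_monomial_mx.
  by apply: eq_monomial_mx => // x; rewrite zsgn_flip eqxx; ring.
rewrite -(monomial_mx0 _ (flip m)); apply: eq_monomial_mx => // x.
by rewrite zsgn_flip (negbTE mNk); ring.
Qed.

Lemma ibracket_sigma_zy k : ibracket (sigma_z R k) (sigma_y R k) = sigma_x R k *+ 2.
Proof.
rewrite sigma_yE sigma_xE ibracket_sigma_z_monomial -scaler_nat scale_monomial_mx.
apply: eq_monomial_mx => // x; rewrite zsgn_flip eqxx.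
by have ii := sqr_i_C; have ss := zsgnM_self k x; ring: ii ss.
Qed.

End PauliMonomials.

Arguments zsgn {R N}.

Lemma sum_ltn_pair_pick (V : nmodType) n (a b : 'I_n) (v : V) : (a < b)%N ->
  \sum_(i < n) \sum_(j < n | (i < j)%N) (if (i == a) && (j == b) then v else 0) = v.
Proof.
move=> ltab; rewrite (bigD1 a) //= (bigD1 b) //= !eqxx big1 => [|j /andP[_ /negbTE->]] //.
by rewrite addr0 big1 ?addr0 // => i /negbTE iNa; rewrite big1 // => j _; rewrite iNa.
Qed.

Section Generation.
Variables (R : rcfType) (N : nat).
Local Notation C := R[i].
Local Notation I := 'I_(2 ^ N).
Local Notation iC := ('i)%C.
Local Notation ibracket := (@ibracket R N).
Local Notation L := (lie_closure (@gen_set R N)).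
Implicit Types (a b i j k m : 'I_N) (x : I).

Lemma lie_sigma_z k : L (sigma_z R k).
Proof. by apply: lc_gen; left; exists k. Qed.

Lemma lie_sum_sigma_x : L (\sum_(k < N) sigma_x R k).
Proof. by apply: lc_gen; right; left. Qed.

Lemma lie_sum_sigma_yy :
  L (\sum_(i < N) \sum_(j < N | (i < j)%N) sigma_y R i *m sigma_y R j).
Proof. by apply: lc_gen; right; right. Qed.

Lemma lie_sigma_y k : L (sigma_y R k).
Proof.
have := lc_bracket (lie_sigma_z k) lie_sum_sigma_x.
rewrite ibracket_sumr (bigD1 k) //= big1 => [|m /negbTE mNk]; last first.
  by rewrite ibracket_sigma_zx mNk.
by rewrite ibracket_sigma_zx eqxx addr0 => /lie_closureN; rewrite opprK; apply: lie_closureMn.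
Qed.

Lemma lie_sigma_x k : L (sigma_x R k).
Proof.
have := lc_bracket (lie_sigma_z k) (lie_sigma_y k).
by rewrite ibracket_sigma_zy; apply: lie_closureMn.
Qed.

Definition flip2_sgn (i j a : 'I_N) : C :=
  (if i == a then -1 else 1) * (if j == a then -1 else 1).

(* [1 - flip2_sgn i j c] vanishes unless [c] is exactly one of [i], [j]. *)
Lemma flip2_sgn_annihilate i j a b : (i < j)%N -> (a < b)%N ->
  ~~ ((i == a) && (j == b)) -> (1 - flip2_sgn i j a) * (1 - flip2_sgn i j b) = 0.
Proof.
rewrite /flip2_sgn -!val_eqE /= => ltij ltab.
by do 4 (case: eqP => ?); rewrite /=; try lia; move=> _; ring.
Qed.

Lemma ibracket_sigma_zz_yy a b i j : (a < b)%N -> (i < j)%N ->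
  ibracket (sigma_z R a) (ibracket (sigma_z R b) (sigma_y R i *m sigma_y R j)) =
  if (i == a) && (j == b) then (sigma_x R a *m sigma_x R b) *+ 4 else 0.
Proof.
move=> ltab ltij; have iNj : i != j by rewrite -val_eqE (ltn_eqF ltij).
rewrite mul_sigma_y // !ibracket_sigma_z_monomial.
have zsgn_flip2 c x : zsgn c (flip j (flip i x)) = flip2_sgn i j c * zsgn c x.
  by rewrite !zsgn_flip /flip2_sgn; ring.
case: ifP => [/andP[/eqP-> /eqP->] | notab].
  have /negbTE bNa : b != a by rewrite -val_eqE /= gtn_eqF.
  have /negbTE aNb : a != b by rewrite eq_sym bNa.
  rewrite !sigma_xE mul_monomial_mx -scaler_nat scale_monomial_mx.
  apply: eq_monomial_mx => // x; rewrite /= !zsgn_flip !eqxx aNb bNa.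
  have ii := sqr_i_C R; have saa := zsgnM_self R a x; have sbb := zsgnM_self R b x.
  ring: ii saa sbb.
rewrite -(monomial_mx0 _ (flip j \o flip i)); apply: eq_monomial_mx => // x.
rewrite !zsgn_flip2; have := flip2_sgn_annihilate ltij ltab (negbT notab).
move: (flip2_sgn i j a) (flip2_sgn i j b) => ea eb e0.
transitivity (- (iC * iC * zsgn a x * zsgn b x * zsgn i x * zsgn j x) *
  ((1 - ea) * (1 - eb))); first by ring.
by rewrite e0 mulr0.
Qed.

Lemma sigma_xC a b : sigma_x R a *m sigma_x R b = sigma_x R b *m sigma_x R a.
Proof. by rewrite !sigma_xE !mul_monomial_mx; apply: eq_monomial_mx => // x; rewrite /= flipC. Qed.

Lemma lie_sigma_xx a b : a != b -> L (sigma_x R a *m sigma_x R b).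
Proof.
wlog ltab : a b / (a < b)%N => [wlog_ab aNb|_].
  case: (ltngtP a b) => [ltab|ltba|/val_inj eq_ab]; first exact: wlog_ab.
    by rewrite sigma_xC; apply: wlog_ab; rewrite // eq_sym.
  by rewrite eq_ab eqxx in aNb.
have := lc_bracket (lie_sigma_z a) (lc_bracket (lie_sigma_z b) lie_sum_sigma_yy).
rewrite !ibracket_sumr; under eq_bigr do rewrite !ibracket_sumr.
under eq_bigr => i _ do under eq_bigr => j ltij do rewrite (ibracket_sigma_zz_yy ltab ltij).
by rewrite sum_ltn_pair_pick //; apply: lie_closureMn.
Qed.

Lemma ibracket_sigma_y_xx k m : m != k ->
  ibracket (sigma_y R k) (sigma_x R k *m sigma_x R m) = (sigma_z R k *m sigma_x R m) *+ 2.
Proof.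
move=> mNk; rewrite sigma_yE !sigma_xE sigma_zE !mul_monomial_mx ibracket_monomial_mx.
  rewrite -scaler_nat scale_monomial_mx; apply: eq_monomial_mx => x /=; first by rewrite flipK.
  by rewrite !zsgn_flip eqxx (negbTE mNk); have := sqr_i_C R => ii; ring: ii.
by move=> x /=; rewrite flipK flipC flipK.
Qed.

Lemma lie_sigma_zx k m : m != k -> L (sigma_z R k *m sigma_x R m).
Proof.
move=> mNk; have kNm : k != m by rewrite eq_sym.
have := lc_bracket (lie_sigma_y k) (lie_sigma_xx kNm).
by rewrite ibracket_sigma_y_xx //; apply: lie_closureMn.
Qed.

Lemma ibracket_sigma_zx_y k m : m != k ->
  ibracket (sigma_z R k *m sigma_x R m) (sigma_y R m) = - (sigma_z R k *m sigma_z R m *+ 2).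
Proof.
move=> mNk; rewrite sigma_yE sigma_xE !sigma_zE !mul_monomial_mx ibracket_monomial_mx //.
rewrite -scaler_nat -scaleNr scale_monomial_mx.
apply: eq_monomial_mx => x /=; first by rewrite flipK.
rewrite !zsgn_flip eqxx (negbTE mNk).
by have := sqr_i_C R; have := zsgnM_self R m x => ss ii; ring: ii ss.
Qed.

Lemma lie_sigma_zz k m : m != k -> L (sigma_z R k *m sigma_z R m).
Proof.
move=> mNk; have := lc_bracket (lie_sigma_zx mNk) (lie_sigma_y m).
by rewrite ibracket_sigma_zx_y // => /lie_closureN; rewrite opprK; apply: lie_closureMn.
Qed.

End Generation.

Section FlipWeights.
Variables (R : rcfType) (N : nat).
Local Notation C := R[i].
Local Notation I := 'I_(2 ^ N).
Local Notation iC := ('i)%C.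
Local Notation ibracket := (@ibracket R N).
Local Notation L := (lie_closure (@gen_set R N)).
Implicit Types (a x : I) (k l m : 'I_N) (f g : I -> C).

(* [monomial_mx (flip k) f] is diag(f) X_k and the second component is
   diag(f) (i Z_k X_k) = - diag(f) Y_k. *)
Definition lie_flip_weight k f :=
  L (monomial_mx (flip k) f) /\ L (iC *: monomial_mx (flip k) (fun x => zsgn k x * f x)).

Lemma eq_lie_flip_weight k f g : f =1 g -> lie_flip_weight k f -> lie_flip_weight k g.
Proof.
move=> eq_fg [Lf LZf]; rewrite /lie_flip_weight -(eq_monomial_mx (frefl _) eq_fg).
by rewrite -(eq_monomial_mx (frefl _) (fun x => congr1 (fun c => zsgn k x * c) (eq_fg x))).
Qed.

Lemma lie_flip_weight1 k : lie_flip_weight k (fun=> 1).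
Proof.
split; first by rewrite -sigma_xE; apply: lie_sigma_x.
have := lie_closureN (lie_sigma_y R k); rewrite sigma_yE -scaleN1r !scale_monomial_mx.
by congr L; apply: eq_monomial_mx => // x; ring.
Qed.

Lemma lie_flip_weightD k f g :
  lie_flip_weight k f -> lie_flip_weight k g -> lie_flip_weight k (f \+ g).
Proof.
move=> [Lf LZf] [Lg LZg]; split; first by rewrite -add_monomial_mx; apply: lc_add.
have := lc_add LZf LZg; rewrite -scalerDr add_monomial_mx.
by congr (L (_ *: _)); apply: eq_monomial_mx => // x /=; ring.
Qed.

Lemma lie_flip_weightZ k (r : R) f :
  lie_flip_weight k f -> lie_flip_weight k (fun x => r%:C%C * f x).
Proof.
move=> [Lf LZf]; split; first by rewrite -scale_monomial_mx; apply: lc_scale.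
have := lc_scale r LZf; rewrite scalerA mulrC -scalerA scale_monomial_mx.
by congr (L (_ *: _)); apply: eq_monomial_mx => // x; ring.
Qed.

Lemma ibracket_sigma_zz_monomial k m g : m != k ->
  ibracket (sigma_z R k *m sigma_z R m) (monomial_mx (flip k) g) =
  (iC *: monomial_mx (flip k) (fun x => zsgn k x * (zsgn m x * g x))) *+ 2.
Proof.
move=> mNk; rewrite !sigma_zE mul_monomial_mx ibracket_monomial_mx //.
rewrite -scaler_nat scalerA scale_monomial_mx; apply: eq_monomial_mx => // x.
by rewrite /= !zsgn_flip eqxx [k == m]eq_sym (negbTE mNk); ring.
Qed.

Lemma lie_flip_weightM_zsgn k m f : m != k ->
  lie_flip_weight k f -> lie_flip_weight k (fun x => zsgn m x * f x).
Proof.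
move=> mNk [Lf LZf]; split; last first.
  have := lc_bracket (lie_sigma_zz R mNk) Lf.
  by rewrite ibracket_sigma_zz_monomial //; apply: lie_closureMn.
have LM := lc_bracket (lie_sigma_zz R mNk) LZf.
rewrite ibracketZr ibracket_sigma_zz_monomial // -scalerMnr in LM.
have -> : monomial_mx (flip k) (fun x => zsgn m x * f x) = ((-1)%:C)%C *:
    (iC *: (iC *: monomial_mx (flip k) (fun x => zsgn k x * (zsgn m x * (zsgn k x * f x))))).
  rewrite !scale_monomial_mx; apply: eq_monomial_mx => // x.
  by have := sqr_i_C R; have := zsgnM_self R k x => ss ii; ring: ii ss.
exact/lc_scale/(lie_closureMn (n := 2)).
Qed.

Definition same_qbit a l x : C := (qbit l x == qbit l a)%:R.

Lemma same_qbit_zsgn a l x : same_qbit a l x = 2^-1 * (1 + zsgn l a * zsgn l x).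
Proof.
have two_neq0 : (2 : C) != 0 by rewrite pnatr_eq0.
by rewrite /same_qbit /zsgn; case: (qbit l x); case: (qbit l a) => /=; field.
Qed.

Lemma lie_flip_weight_same_qbits k a (r : seq 'I_N) :
  lie_flip_weight k (fun x => \prod_(l <- r | l != k) same_qbit a l x).
Proof.
elim: r => [|l r IHr].
  by apply: eq_lie_flip_weight (lie_flip_weight1 k) => x; rewrite big_nil.
case: (eqVneq l k) => [->|lNk].
  by apply: eq_lie_flip_weight IHr => x; rewrite big_cons eqxx.
have := lie_flip_weightD (lie_flip_weightZ (2^-1) IHr)
  (lie_flip_weightZ (2^-1 * (if qbit l a then -1 else 1)) (lie_flip_weightM_zsgn lNk IHr)).
apply: eq_lie_flip_weight => x /=; rewrite big_cons lNk same_qbit_zsgn.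
rewrite !rmorphM !fmorphV !rmorph_nat [zsgn l a]/zsgn.
by case: (qbit l a); rewrite ?rmorphN1 ?rmorph1; ring.
Qed.

Lemma prod_same_qbit k a x :
  \prod_(l | l != k) same_qbit a l x = ((x == a) || (x == flip k a))%:R.
Proof.
case: (boolP [forall l, (l != k) ==> (qbit l x == qbit l a)]) => [/forallP agree|].
  rewrite big1 => [|l lNk]; last by rewrite /same_qbit (implyP (agree l) lNk).
  suff -> : (x == a) || (x == flip k a) by [].
  have agree_l l : l != k -> qbit l x = qbit l a by move=> lNk; apply/eqP/(implyP (agree l)).
  case: (eqVneq (qbit k x) (qbit k a)) => [xak|xaNk]; apply/orP; [left|right].
    by apply/eqP/eq_qbits => l; case: (eqVneq l k) => [->|/agree_l].
  apply/eqP/eq_qbits => l; rewrite qbit_flip; case: (eqVneq l k) => [->|lNk].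
    by move: xaNk; rewrite addbT; case: (qbit k x); case: (qbit k a).
  by rewrite agree_l // addbF.
case/forallPn=> l; rewrite negb_imply => /andP[lNk xaNl].
rewrite (bigD1 l) //= /same_qbit (negbTE xaNl) mul0r.
case: (eqVneq x a) => [xa|_]; first by rewrite xa eqxx in xaNl.
case: (eqVneq x (flip k a)) => [xfa|_] //.
by rewrite xfa qbit_flip (negbTE lNk) addbF eqxx in xaNl.
Qed.

Lemma lie_sym_delta_flip k a : L (sym_delta a (flip k a)).
Proof.
have [+ _] := lie_flip_weight_same_qbits k a (index_enum _).
rewrite (monomial_mx_pair (flipK k) (flip_neq k a)); last first.
  by move=> x /negbTE xNa /negbTE xNfa; rewrite prod_same_qbit xNa xNfa.
by rewrite !prod_same_qbit !eqxx /= orbT !scale1r.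
Qed.

Lemma lie_skew_delta_flip k a : L (iC *: skew_delta a (flip k a)).
Proof.
have [_] := lie_flip_weight_same_qbits k a (index_enum _).
rewrite (monomial_mx_pair (flipK k) (flip_neq k a)); last first.
  by move=> x /negbTE xNa /negbTE xNfa; rewrite prod_same_qbit xNa xNfa mulr0.
rewrite !prod_same_qbit !eqxx /= orbT zsgn_flip eqxx !mulr1 mulN1r scaleNr.
rewrite -scalerBr scalerA mulrC -scalerA /zsgn.
by case: qbit; rewrite ?scale1r // scaleN1r => /lie_closureN; rewrite opprK.
Qed.

End FlipWeights.

Section HermitianSpan.
Variables (R : rcfType) (N : nat).
Local Notation C := R[i].
Local Notation I := 'I_(2 ^ N).
Local Notation M := 'M[C]_(2 ^ N).
Local Notation iC := ('i)%C.
Local Notation ibracket := (@ibracket R N).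
Local Notation L := (lie_closure (@gen_set R N)).
Implicit Types (a x y m : I) (k l : 'I_N).

Definition lie_pair x y := L (sym_delta x y) /\ L (iC *: skew_delta x y).

Lemma lie_pair_flip k a : lie_pair a (flip k a).
Proof. by split; [apply: lie_sym_delta_flip | apply: lie_skew_delta_flip]. Qed.

Lemma ibracket_sym_delta x m y : x != m -> m != y -> x != y ->
  ibracket (sym_delta x m) (sym_delta m y) = iC *: skew_delta x y.
Proof. by move=> *; rewrite /Defs.ibracket commutator_sym_delta. Qed.

Lemma ibracket_sym_skew_delta x m y : x != m -> m != y -> x != y ->
  ibracket (sym_delta x m) (iC *: skew_delta m y) = - sym_delta x y.
Proof.
move=> *; rewrite ibracketZr /Defs.ibracket commutator_sym_skew_delta //.
by rewrite scalerA sqr_i_C scaleN1r.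
Qed.

Lemma ibracket_sym_skew_delta_same x y : x != y ->
  ibracket (sym_delta x y) (iC *: skew_delta x y) = diag_delta x y *+ 2.
Proof.
move=> xNy; rewrite ibracketZr /Defs.ibracket commutator_sym_skew_delta_same //.
by rewrite scalerA sqr_i_C scaleN1r mulNrn opprK.
Qed.

Lemma lie_pair_trans x m y : x != m -> m != y -> x != y ->
  lie_pair x m -> lie_pair m y -> lie_pair x y.
Proof.
move=> xNm mNy xNy [Lsym_xm _] [Lsym_my Lskew_my]; split.
  by have := lie_closureN (lc_bracket Lsym_xm Lskew_my); rewrite ibracket_sym_skew_delta // opprK.
by have := lc_bracket Lsym_xm Lsym_my; rewrite ibracket_sym_delta.
Qed.

Definition diff_qbits x y := [pred l : 'I_N | qbit l x != qbit l y].

Lemma card_diff_qbits_flip l x y : l \in diff_qbits x y ->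
  #|diff_qbits x y| = #|diff_qbits (flip l x) y|.+1.
Proof.
move=> dl; rewrite (cardD1 l) dl add1n; congr _.+1; apply: eq_card => l' /=.
rewrite !inE qbit_flip; case: (eqVneq l' l) => [->|_]; last by rewrite addbF.
by rewrite addbT; move: dl; rewrite inE; case: (qbit l x); case: (qbit l y).
Qed.

Lemma diff_qbits0 x y : #|diff_qbits x y| = 0 -> x = y.
Proof. by move/card0_eq => nodiff; apply: eq_qbits => l; move/negbFE/eqP: (nodiff l). Qed.

Lemma lie_pair_neq x y : x != y -> lie_pair x y.
Proof.
move dxy : #|diff_qbits x y| => n; elim: n x dxy => [|n IHn] x dxy xNy.
  by rewrite (diff_qbits0 dxy) eqxx in xNy.
have [l dl] : exists l, l \in diff_qbits x y by apply/card_gt0P; rewrite dxy.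
have xNm : x != flip l x by rewrite eq_sym flip_neq.
case: (eqVneq (flip l x) y) => [<-|mNy]; first exact: lie_pair_flip.
apply: lie_pair_trans xNm mNy xNy (lie_pair_flip l x) (IHn _ _ mNy).
by move: dxy; rewrite (card_diff_qbits_flip dl) => -[].
Qed.

Lemma lie_diag_delta x y : L (diag_delta x y).
Proof.
case: (eqVneq x y) => [->|xNy]; first by rewrite /diag_delta subrr; apply: lc_zero.
have [Lsym Lskew] := lie_pair_neq xNy.
by have := lc_bracket Lsym Lskew; rewrite ibracket_sym_skew_delta_same //; apply: lie_closureMn.
Qed.

Lemma conjc_ReIm (z : C) : (z^*)%C = ((complex.Re z)%:C)%C - iC * ((complex.Im z)%:C)%C.
Proof. by case: z => a b; simpc. Qed.

Lemma conjc_fixed_real (z : C) : z = (z^*)%C -> z = ((complex.Re z)%:C)%C.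
Proof.
case: z => a b /= [] b_eqN; suff -> : b = 0 by [].
have : b *+ 2 == 0 by rewrite mulr2n {1}b_eqN addNr.
by rewrite mulrn_eq0 => /eqP.
Qed.

Lemma lie_hermitian_pair (A : M) x y : A y x = ((A x y)^*)%C -> x != y ->
  L (A x y *: delta_mx x y + A y x *: delta_mx y x).
Proof.
move=> Ayx xNy; have [Lsym Lskew] := lie_pair_neq xNy.
have := lc_add (lc_scale (complex.Re (A x y)) Lsym) (lc_scale (complex.Im (A x y)) Lskew).
congr L; rewrite Ayx conjc_ReIm {3}[A x y]complexE.
by apply/matrixP => u v; rewrite !mxE; ring.
Qed.

Lemma lie_offdiag (A : M) : is_hermitian A ->
  L (\sum_x \sum_(y | y != x) A x y *: delta_mx x y).
Proof.
move=> hermA; set offdiag := \sum_x _.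
have swap : \sum_x \sum_(y | y != x) A y x *: delta_mx y x = offdiag.
  rewrite /offdiag; under eq_bigr => x _ do rewrite big_mkcond.
  under [RHS]eq_bigr => x _ do rewrite big_mkcond.
  by rewrite exchange_big; apply: eq_bigr => x _; apply: eq_bigr => y _; rewrite eq_sym.
have : L (\sum_x \sum_(y | y != x) (A x y *: delta_mx x y + A y x *: delta_mx y x)).
  apply: lie_closure_sum => x _; apply: lie_closure_sum => y yNx.
  by apply: lie_hermitian_pair; rewrite 1?eq_sym.
under eq_bigr do rewrite big_split.
by rewrite big_split /= swap -mulr2n; apply: lie_closureMn.
Qed.

Lemma lie_diag (A : M) : is_hermitian A -> traceless A ->
  L (\sum_x A x x *: delta_mx x x).
Proof.
move=> hermA trA; pose x0 : I := Ordinal (expn_gt0 2 N).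
have -> : \sum_x A x x *: delta_mx x x = \sum_x ((complex.Re (A x x))%:C)%C *: diag_delta x x0.
  under [RHS]eq_bigr => x _ do rewrite -(conjc_fixed_real (hermA x x)) scalerBr.
  rewrite sumrB -scaler_suml; move: trA; rewrite /traceless /mxtrace => ->.
  by rewrite scale0r subr0.
by apply: lie_closure_sum => x _; apply/lc_scale/lie_diag_delta.
Qed.

Lemma hermitian_traceless_in_lie_closure (A : M) : is_hermitian A -> traceless A -> L A.
Proof.
move=> hermA trA; rewrite [A]matrix_sum_delta.
under eq_bigr => x _ do rewrite (bigD1 x) //=.
by rewrite big_split /=; apply: lc_add; [apply: lie_diag | apply: lie_offdiag].
Qed.

End HermitianSpan.

Section HermitianClosure.
Variables (R : rcfType) (N : nat).
Local Notation C := R[i].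
Local Notation I := 'I_(2 ^ N).
Local Notation M := 'M[C]_(2 ^ N).
Local Notation hermitian := (@is_hermitian R N).
Local Notation traceless := (@traceless R N).
Implicit Types (i j k : 'I_N) (x : I) (A B : M).

Lemma hermitian0 : hermitian 0.
Proof. by move=> x y; rewrite !mxE rmorph0. Qed.

Lemma hermitianD A B : hermitian A -> hermitian B -> hermitian (A + B).
Proof. by move=> hA hB x y; rewrite !mxE rmorphD hA hB. Qed.

Lemma hermitianZ (r : R) A : hermitian A -> hermitian (r%:C%C *: A).
Proof. by move=> hA x y; rewrite !mxE rmorphM hA; congr (_ * _); exact/esym/conjc_real. Qed.

Lemma hermitian_sum (J : finType) (P : pred J) (F : J -> M) :
  (forall j : J, P j -> hermitian (F j)) -> hermitian (\sum_(j | P j) F j).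
Proof. by move=> hF; apply: (big_ind hermitian) => //; [apply: hermitian0 | apply: hermitianD]. Qed.

Lemma hermitian_ibracket A B : hermitian A -> hermitian B -> hermitian (ibracket A B).
Proof.
move=> hA hB x y; rewrite /ibracket !mxE !rmorphM rmorphB.
have conj_mulmx (U V : M) : hermitian U -> hermitian V ->
    \sum_j U y j * V j x = ((\sum_j V x j * U j y)^*)%C.
  by move=> hU hV; rewrite rmorph_sum; apply: eq_bigr => j _; rewrite rmorphM hU hV mulrC.
rewrite (conj_mulmx A B) // (conj_mulmx B A) //.
rewrite -opprB mulrN -mulNr; congr (_ * _).
by apply/eqP; rewrite eq_complex /= oppr0 !eqxx.
Qed.

Lemma hermitian_monomial_mx p f : involutive p ->
  (forall x, f (p x) = ((f x)^*)%C) -> hermitian (monomial_mx p f).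
Proof.
move=> pK f_conj x y; rewrite !monomial_mxE.
case: (eqVneq x (p y)) => [->|xNpy]; first by rewrite pK eqxx -f_conj pK.
case: (eqVneq y (p x)) => [yx|_]; last by rewrite rmorph0.
by rewrite yx pK eqxx in xNpy.
Qed.

Lemma zsgn_conj k x : ((zsgn k x)^*)%C = zsgn k x :> C.
Proof. by rewrite /zsgn; case: qbit; rewrite ?rmorphN1 ?rmorph1. Qed.

Lemma sum_zsgn k : \sum_(x : I) zsgn k x = 0 :> C.
Proof.
have sum_opp : \sum_(x : I) zsgn k x = - \sum_(x : I) zsgn k x :> C.
  rewrite {1}(reindex_inj (can_inj (flipK k))) -sumrN /=.
  by apply: eq_bigr => x _; rewrite zsgn_flip eqxx mulN1r.
have : (\sum_(x : I) zsgn k x : C) *+ 2 == 0 by rewrite mulr2n {1}sum_opp addNr.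
by rewrite mulrn_eq0 => /eqP.
Qed.

Lemma gen_set_hermitian_traceless A : @gen_set R N A -> hermitian A /\ traceless A.
Proof.
case=> [[k ->]|[->|->]].
- rewrite sigma_zE; split; first by apply: hermitian_monomial_mx => // x; rewrite zsgn_conj.
  by rewrite /traceless -(sum_zsgn k); apply: eq_bigr => x _; rewrite mxE eqxx.
- split.
    apply: hermitian_sum => k _; rewrite sigma_xE.
    by apply: hermitian_monomial_mx => [|x]; [apply: flipK | rewrite rmorph1].
  rewrite /traceless raddf_sum; apply: big1 => k _.
  by rewrite sigma_xE; apply: mxtrace_monomial_mx => x; apply: flip_neq.
have ltn_neq i j : (i < j)%N -> i != j by move=> ltij; rewrite -val_eqE (ltn_eqF ltij).
split.
  apply: hermitian_sum => i _; apply: hermitian_sum => j /ltn_neq iNj.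
  rewrite mul_sigma_y //; apply: hermitian_monomial_mx => x /=; first by rewrite flipC !flipK.
  rewrite !zsgn_flip !eqxx (negbTE iNj) eq_sym (negbTE iNj) rmorphN rmorphM /zsgn.
  by case: (qbit i x); case: (qbit j x); rewrite ?rmorphN1 ?rmorph1; ring.
rewrite /traceless raddf_sum; apply: big1 => i _; rewrite raddf_sum; apply: big1 => j /ltn_neq iNj.
by rewrite mul_sigma_y //; apply: mxtrace_monomial_mx => x; apply: flip2_neq.
Qed.

Lemma lie_closure_hermitian_traceless A :
  lie_closure (@gen_set R N) A -> hermitian A /\ traceless A.
Proof.
elim=> {A} [A /gen_set_hermitian_traceless //| | A B _ [hA tA] _ [hB tB]
  | r A _ [hA tA] | A B _ [hA tA] _ [hB tB]].
- by split; [apply: hermitian0 | apply: mxtrace0].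
- by split; [apply: hermitianD | rewrite /traceless mxtraceD tA tB addr0].
- by split; [apply: hermitianZ | rewrite /traceless mxtraceZ tA mulr0].
split; first exact: hermitian_ibracket.
by rewrite /traceless /ibracket mxtraceZ raddfB /= mxtrace_mulC subrr mulr0.
Qed.

End HermitianClosure.

Unset Implicit Arguments.

Theorem proposition1 (R : rcfType) (N : nat) (hN : (1 <= N)%N)
    (A : 'M[complex R]_(2 ^ N)) :
  lie_closure (@gen_set R N) A <-> is_hermitian A /\ traceless A.
Proof.
split; first exact: lie_closure_hermitian_traceless.
by case; apply: hermitian_traceless_in_lie_closure.
Qed.
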